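(* Assume the setting, utility assumptions and trading rule in the context, and assume moreover that all goods are essential for all agents, so $X_i=\mathbb{R}^{n+1}_{++}$ for every $i$. Start from initial holdings $x_i^0\in X_i$. (a) For any fixed premium levels $\delta_{ij}>0$, any sequence of bilateral trades (each executed according to the trading rule with these premiums) is finite: after finitely many trades no further bilateral trade is available. (b) Consider a process organized in stages $k=1,2,\dots$: in stage $k$ the premiums are $\delta^k_{ij}>0$, bilateral trades with these premiums are carried out (in any order) until no bilateral trade is available, after which the premiums are lowered to $\delta^{k+1}_{ij}\le\delta^k_{ij}$, with $\max_{i,j}\delta^k_{ij}\to0$ as $k\to\infty$. Then the sequences of holdings $x_i$ and price thresholds $p_{ij}(x_i)$ generated by this process converge, and their limits $\bar x_i$ form, together with prices $\bar p_j$, an equilibrium of prices and holdings (each $\bar x_i$ maximizes $u_i$ over $X_i$ subject to $x_{i0}+\sum_{j=1}^n\bar p_jx_{ij}=\bar x_{i0}+\sum_{j=1}^n\bar p_j\bar x_{ij}$), where moreover $p_{ij}(\bar x_i)=\bar p_j$ for every good $j\ne0$ and every agent $i$.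
   Context: There are goods $j=0,1,\dots,n$, good $0$ being money, and agents $i=1,\dots,m$; agent $i$ holds $x_i=(x_{i0},\dots,x_{in})$. Utility assumptions: $u_i$ is concave and twice continuously differentiable on $X_i$; $\nabla u_i(x_i)$ has all components positive; $\nabla^2u_i(x_i)$ is negative definite on the subspace orthogonal to $\nabla u_i(x_i)$; for every $x_i\in X_i$ the set $\{x_i'\in X_i:u_i(x_i')\ge u_i(x_i)\}$ is closed in $\mathbb{R}^{n+1}$. Price threshold: $p_{ij}(x_i)=\frac{\partial u_i}{\partial x_{ij}}(x_i)/\frac{\partial u_i}{\partial x_{i0}}(x_i)$ for $j\ne0$. Notation: $[\pi_j,-1]$ is the vector in $\mathbb{R}^{n+1}$ with component $0$ equal to $\pi_j$, component $j$ equal to $-1$, other components $0$. For $\pi_j>0$ define $\xi^+_j(x_i,\pi_j)=\operatorname{argmax}\{u_i(x_i+\xi[\pi_j,-1]):\xi\ge0,\ x_i+\xi[\pi_j,-1]\in X_i\}$ and $\xi^-_j(x_i,\pi_j)=\operatorname{argmax}\{u_i(x_i-\xi[\pi_j,-1]):\xi\ge0,\ x_i-\xi[\pi_j,-1]\in X_i\}$. Each agent $i$ has for each good $j\ne0$ a premium $\delta_{ij}>0$, and sets selling and buying prices $p^+_{ij}(x_i)=p_{ij}(x_i)+\delta_{ij}$, $p^-_{ij}(x_i)=p_{ij}(x_i)-\delta_{ij}$. Bilateral trade: a trade in good $j\ne0$ between seller $i_1$ and buyer $i_2$ at price $\pi_j$ is available if $x_{i_1j}>0$, $p^+_{i_1j}(x_{i_1})\le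 p^-_{i_2j}(x_{i_2})$ and $\pi_j\in[p^+_{i_1j}(x_{i_1}),p^-_{i_2j}(x_{i_2})]$; executing it transfers the amount $\xi_j=\min\{\xi^+_j(x_{i_1},\pi_j),\xi^-_j(x_{i_2},\pi_j)\}$ of good $j$ from $i_1$ to $i_2$ and the money amount $\pi_j\xi_j$ from $i_2$ to $i_1$, i.e. $x'_{i_1}=x_{i_1}+\xi_j[\pi_j,-1]$, $x'_{i_2}=x_{i_2}-\xi_j[\pi_j,-1]$, other agents' holdings unchanged. *)

(* MathComp + MathComp-Analysis, reals R : realType.
   Goods are indexed by 'I_(n.+1) (good ord0 = money), agents by 'I_m.
   A bundle is a row vector 'rV[R]_(n.+1); its component j is x 0 j. *)
From HB Require Import structures.
From mathcomp Require Import all_boot all_order all_algebra.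
From mathcomp Require Import all_classical all_reals all_analysis.
Set Implicit Arguments. Unset Strict Implicit. Unset Printing Implicit Defensive.
Import Order.TTheory GRing.Theory Num.Theory.
Import numFieldNormedType.Exports.
Local Open Scope classical_set_scope.
Local Open Scope ring_scope.

Section Defs.
Variables (R : realType) (n m : nat).

Definition bundle := 'rV[R]_(n.+1).

Definition Xpos : set bundle := [set x | forall j : 'I_(n.+1), 0 < x 0 j].

Definition unitv (j : 'I_(n.+1)) : bundle := \row_k (if k == j then 1 else 0).

Definition partial (f : bundle -> R) (j : 'I_(n.+1)) (x : bundle) : R :=
  'D_(unitv j) f x.

Definition C2_on (f : bundle -> R) : Prop :=
  forall x, Xpos x ->
    [/\ continuous_at x f,
        forall j, derivable f x (unitv j),
        forall j, {for x, continuous (partial f j)},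
        forall j k, derivable (partial f j) x (unitv k)
      & forall j k, {for x, continuous (partial (partial f j) k)}].

Definition concave_on (f : bundle -> R) : Prop :=
  forall x y (t : R), Xpos x -> Xpos y -> 0 <= t <= 1 ->
    t * f x + (1 - t) * f y <= f (t *: x + (1 - t) *: y).

Definition utility_assumptions (u : bundle -> R) : Prop :=
  [/\ concave_on u,
      C2_on u,
      (forall x, Xpos x -> forall j, 0 < partial u j x),
      (forall x, Xpos x -> forall v : bundle, v != 0 ->
         \sum_(j < n.+1) v 0 j * partial u j x = 0 ->
         \sum_(j < n.+1) \sum_(k < n.+1)
            v 0 j * v 0 k * partial (partial u j) k x < 0)
    &
      (forall x, Xpos x -> closed [set x' | Xpos x' /\ u x <= u x'])].

Definition pthr (u : bundle -> R) (x : bundle) (j : 'I_(n.+1)) : R :=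
  partial u j x / partial u ord0 x.

Definition dirv (pi : R) (j : 'I_(n.+1)) : bundle :=
  \row_k (if k == ord0 then pi else if k == j then -1 else 0).

Definition is_argmax_dir (u : bundle -> R) (x d : bundle) (xi : R) : Prop :=
  [/\ 0 <= xi, Xpos (x + xi *: d) &
      forall xi', 0 <= xi' -> Xpos (x + xi' *: d) ->
        u (x + xi' *: d) <= u (x + xi *: d)].

Definition is_xi_plus u x j pi xi := is_argmax_dir u x (dirv pi j) xi.
Definition is_xi_minus u x j pi xi := is_argmax_dir u x (- dirv pi j) xi.

Definition state := 'I_m -> bundle.
Definition premiums := 'I_m -> 'I_(n.+1) -> R.

Definition psell (u : 'I_m -> bundle -> R) (delta : premiums) (x : state) i j :=
  pthr (u i) (x i) j + delta i j.
Definition pbuy (u : 'I_m -> bundle -> R) (delta : premiums) (x : state) i j :=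
  pthr (u i) (x i) j - delta i j.

Definition trade_avail (u : 'I_m -> bundle -> R) (delta : premiums) (x : state)
    (i1 i2 : 'I_m) (j : 'I_(n.+1)) (pi : R) : Prop :=
  [/\ i1 != i2, j != ord0, 0 < x i1 0 j,
      psell u delta x i1 j <= pbuy u delta x i2 j
    & psell u delta x i1 j <= pi <= pbuy u delta x i2 j].

Definition some_trade_avail u delta x : Prop :=
  exists i1 i2 j pi, trade_avail u delta x i1 i2 j pi.

Definition trade_step (u : 'I_m -> bundle -> R) (delta : premiums) (x y : state) : Prop :=
  exists i1 i2 j pi xp xm,
    [/\ trade_avail u delta x i1 i2 j pi,
        is_xi_plus (u i1) (x i1) j pi xp,
        is_xi_minus (u i2) (x i2) j pi xm
      & y = (fun i => if i == i1 then x i1 + Num.min xp xm *: dirv pi j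
                      else if i == i2 then x i2 - Num.min xp xm *: dirv pi j
                      else x i)].

Definition maxprem (delta : premiums) : R :=
  \big[Num.max/0]_(i < m) \big[Num.max/0]_(j < n.+1 | j != ord0) delta i j.

(* The staged process: s t is the holding profile after step t, sg t the
   current stage. *)
Definition staged_process (u : 'I_m -> bundle -> R) (delta : nat -> premiums)
    (x0 : state) (s : nat -> state) (sg : nat -> nat) : Prop :=
  [/\ s 0%N = x0, sg 0%N = 0%N &
      forall t, (sg t.+1 = sg t /\ trade_step u (delta (sg t)) (s t) (s t.+1)) \/
                [/\ ~ some_trade_avail u (delta (sg t)) (s t),
                    sg t.+1 = (sg t).+1 & s t.+1 = s t]].

Definition budget (p : 'I_(n.+1) -> R) (x : bundle) : R :=
  x 0 ord0 + \sum_(j < n.+1 | j != ord0) p j * x 0 j.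

Definition equilibrium (u : 'I_m -> bundle -> R) (xbar : state)
    (pbar : 'I_(n.+1) -> R) : Prop :=
  forall i, Xpos (xbar i) /\
    forall x, Xpos x -> budget pbar x = budget pbar (xbar i) -> u i x <= u i (xbar i).

End Defs.

(** Along any sequence of trades every agent's utility is nondecreasing and
  bounded (holdings stay in the compact set of bundles dominated by the total
  endowment), so the gains of single trades tend to 0.  (a) If the sequence
  were infinite, refine it along an ultrafilter so that holdings converge and
  seller, buyer and good are constant.  The trade
  prices converge to a price separated by the premiums from both limit
  thresholds, so near the limit both partners gain strictly along the trade
  direction; the traded amounts, and hence the gains, are then bounded below,
  a contradiction.  (b) By (a) every stage ends.  At a stage end no trade is
  available, so [p_ij + delta_ij > p_i'j - delta_i'j]; as the premiums vanish,
  at any limit point of stage ends all thresholds coincide with some [pbar].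
  Concavity turns this first-order condition into optimality on the budget
  set.  Any other limit point [y] of the whole process has the same utilities
  (monotone convergence) and the same total; summing the budget inequalities
  puts every [y_i] on the budget hyperplane of [xbar_i], and strict
  quasi-concavity, which is what the Hessian assumption yields, forces
  [y = xbar]. *)
From HB Require Import structures.
From mathcomp Require Import all_boot all_order all_algebra.
From mathcomp Require Import all_classical all_reals all_analysis.
From mathcomp Require Import ring lra.
Import Order.TTheory GRing.Theory Num.Theory.
Import numFieldNormedType.Exports.
Local Open Scope classical_set_scope.
Local Open Scope ring_scope.

Set Implicit Arguments. Unset Strict Implicit. Unset Printing Implicit Defensive.

Lemma dnbhs0_ballP (R : realType) (P : R -> Prop) : (\forall h \near 0^', P h) ->
  exists2 d : R, 0 < d & forall h : R, h != 0 -> `|h| < d -> P h.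
Proof.
move=> /nbhs_ballP [d d0 Hd]; exists d => // h h0 hd; apply: Hd => //.
by rewrite /ball /= sub0r normrN.
Qed.

Section Bundles.
Variables (R : realType) (n : nat).
Local Notation B := (bundle R n).

Lemma unitvE (j k : 'I_n.+1) : unitv R j 0 k = (k == j)%:R.
Proof. by rewrite mxE; case: eqP. Qed.

Lemma dirv_unitv (pi : R) (j : 'I_n.+1) : j != ord0 ->
  dirv pi j = pi *: unitv R ord0 - unitv R j.
Proof.
move=> j0; apply/rowP => l; rewrite !mxE.
case: (eqVneq l ord0) => [->|l0]; first by rewrite eq_sym (negbTE j0); ring.
by case: ifP => _; ring.
Qed.

Lemma line_convex_comb (y d : B) (t a b : R) :
  t *: (y + a *: d) + (1 - t) *: (y + b *: d) = y + (t * a + (1 - t) * b) *: d.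
Proof. by apply/rowP => l; rewrite !mxE; ring. Qed.

Lemma ball_row (x y : B) (r : R) : 0 < r ->
  (forall l, `|x 0 l - y 0 l| < r) -> ball x r y.
Proof. by move=> r0 H; split => // i j; rewrite (ord1 i); apply: H. Qed.

Lemma sum_abs_row_bound (v : B) l : `|v 0 l| <= \sum_k `|v 0 k| + 1.
Proof.
rewrite (bigD1 l) //= -addrA lerDl.
by apply: addr_ge0 => //; apply: sumr_ge0.
Qed.

Lemma Xpos_nbhs (x : B) : Xpos x -> \forall y \near x, Xpos y.
Proof.
move=> Xx.
have pos_near j : \forall y \near x, 0 < (y : B) 0 j.
  have /cvgrPdist_lt /(_ (x 0 j) (Xx j)) := @coord_continuous R 1 n.+1 0 j x.
  apply: filter_app; near=> y => /=.
  by rewrite ltr_norml => /andP[H1 H2]; lra.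
exact: filter_forall pos_near.
Unshelve. all: by end_near.
Qed.

Lemma Xpos_line_nbhs (x v : B) : Xpos x ->
  exists2 d : R, 0 < d & forall t : R, `|t| < d -> Xpos (x + t *: v).
Proof.
move=> /Xpos_nbhs /nbhs_ballP [r r0 Hr].
set S := \sum_k `|v 0 k| + 1.
have S0 : 0 < S by rewrite /S ltr_wpDl ?sumr_ge0.
exists (r / S); first exact: divr_gt0.
move=> t ht; apply: Hr; apply: ball_row => // l.
rewrite !mxE opprD addrA subrr sub0r normrN normrM.
rewrite ltr_pdivlMr // in ht; apply: le_lt_trans ht.
by rewrite ler_wpM2l // sum_abs_row_bound.
Qed.

Lemma Xpos_convex (x y : B) (t : R) : Xpos x -> Xpos y -> 0 <= t <= 1 ->
  Xpos (t *: x + (1 - t) *: y).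
Proof.
move=> Xx Xy /andP[t0 t1] j; rewrite !mxE.
have := Xx j; have := Xy j; nra.
Qed.

Lemma Xpos_between (x y : B) (t : R) : Xpos x -> Xpos y -> 0 <= t <= 1 ->
  Xpos (x + t *: (y - x)).
Proof.
move=> Xx Xy t01; rewrite (_ : _ + _ = t *: y + (1 - t) *: x); first exact: Xpos_convex.
by apply/rowP => l; rewrite !mxE; ring.
Qed.

Lemma Xpos_segment (y d : B) (a b : R) : Xpos y -> Xpos (y + b *: d) ->
  0 <= a <= b -> Xpos (y + a *: d).
Proof.
move=> Xy Xb /andP[a0 ab].
case: (eqVneq b 0) => [b0|bn0].
  have -> : a = 0 by lra.
  by rewrite scale0r addr0.
have b0 : 0 < b by rewrite lt_neqAle eq_sym bn0 /=; lra.
have -> : y + a *: d = (a / b) *: (y + b *: d) + (1 - a / b) *: y.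
  by apply/rowP => l; rewrite !mxE; field; lra.
by apply: Xpos_convex => //; rewrite divr_ge0 ?ler_pdivrMr ?mul1r //; lra.
Qed.

Definition dirderiv (f : B -> R) (x v : B) := \sum_k v 0 k * partial f k x.

Lemma dirderiv_unitv f x k : dirderiv f x (unitv R k) = partial f k x.
Proof.
rewrite /dirderiv (bigD1 k) //= unitvE eqxx mul1r big1 ?addr0 // => i ik.
by rewrite unitvE (negbTE ik) mul0r.
Qed.

Lemma dirderivB f x v w : dirderiv f x (v - w) = dirderiv f x v - dirderiv f x w.
Proof. by rewrite /dirderiv -sumrB; apply: eq_bigr => k _; rewrite !mxE; ring. Qed.

Lemma dirderivZ f x (a : R) v : dirderiv f x (a *: v) = a * dirderiv f x v.
Proof. by rewrite /dirderiv mulr_sumr; apply: eq_bigr => k _; rewrite !mxE; ring. Qed.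

Lemma dirderivN f x v : dirderiv f x (- v) = - dirderiv f x v.
Proof. by rewrite -scaleN1r dirderivZ mulN1r. Qed.

Lemma dirderiv_dirv f x pi j : j != ord0 ->
  dirderiv f x (dirv pi j) = pi * partial f ord0 x - partial f j x.
Proof. by move=> j0; rewrite dirv_unitv // dirderivB dirderivZ !dirderiv_unitv. Qed.

Lemma is_derive_unitv_line (f : B -> R) (y : B) k (t : R) :
  derivable f (y + t *: unitv R k) (unitv R k) ->
  is_derive t 1 (fun s : R => f (y + s *: unitv R k)) (partial f k (y + t *: unitv R k)).
Proof.
move=> df.
have E : (fun h : R => h^-1 *: (((fun s => f (y + s *: unitv R k)) \o shift t) (h *: 1)
            - f (y + t *: unitv R k))) =
         (fun h => h^-1 *: ((f \o shift (y + t *: unitv R k)) (h *: unitv R k)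
            - f (y + t *: unitv R k))).
  apply/funext => h /=; congr (_ *: (f _ - _)).
  by rewrite /shift /= [h *: 1]mulr1 scalerDl addrCA.
split; first by rewrite /derivable E; exact: df.
by rewrite /derive E.
Qed.

Lemma MVT_unitv (f : B -> R) (y : B) k (a : R) :
  (forall t, `|t| <= `|a| -> Xpos (y + t *: unitv R k)) ->
  (forall z, Xpos z -> derivable f z (unitv R k)) ->
  exists2 th, `|th| <= `|a| &
    f (y + a *: unitv R k) - f y = a * partial f k (y + th *: unitv R k).
Proof.
move=> Xline fd.
pose g := fun s : R => f (y + s *: unitv R k).
have gd (t : R) : `|t| <= `|a| -> is_derive t 1 g (partial f k (y + t *: unitv R k)).
  by move=> ht; apply: is_derive_unitv_line; exact/fd/Xline.
have gc (t : R) : `|t| <= `|a| -> {for t, continuous g}.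
  move=> /gd [dg _]; move/derivable1_diffP: dg.
  exact: differentiable_continuous.
have g0 : g 0 = f y by rewrite /g scale0r addr0.
case: (leP 0 a) => ha.
- have h1 (t : R) : t \in `[0, a] -> `|t| <= `|a|.
    by rewrite in_itv /= => /andP[t0 ta]; rewrite !ger0_norm //; lra.
  have cc : {within `[0, a], continuous g}.
    by apply: continuous_in_subspaceT => t /[!inE] /h1; exact: gc.
  have [th /h1 th_a E] :=
    MVT_segment ha (fun t tin => gd t (h1 t (subset_itv_oo_cc tin))) cc.
  by exists th; rewrite // -/(g a) -g0 E subr0 mulrC.
- have h1 (t : R) : t \in `[a, 0] -> `|t| <= `|a|.
    by rewrite in_itv /= => /andP[t0 ta]; rewrite !ler0_norm //; lra.
  have cc : {within `[a, 0], continuous g}.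
    by apply: continuous_in_subspaceT => t /[!inE] /h1; exact: gc.
  have [th /h1 th_a E] :=
    MVT_segment (ltW ha) (fun t tin => gd t (h1 t (subset_itv_oo_cc tin))) cc.
  exists th => //; rewrite -/(g a) -g0; apply: oppr_inj; rewrite opprB E; lra.
Qed.

Lemma partial_increment_bound (f : B -> R) (x y : B) k (a r ep : R) :
  (forall z, ball x r z -> Xpos z /\ forall l, `|partial f l x - partial f l z| < ep) ->
  (forall z, Xpos z -> derivable f z (unitv R k)) ->
  (forall t, `|t| <= `|a| -> ball x r (y + t *: unitv R k)) ->
  `|a * partial f k x - (f (y + a *: unitv R k) - f y)| <= `|a| * ep.
Proof.
move=> near_x fd seg.
have [th th_a ->] := MVT_unitv (fun t ht => (near_x _ (seg t ht)).1) fd.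
rewrite -mulrBr normrM ler_wpM2l //.
exact/ltW/((near_x _ (seg th th_a)).2 k).
Qed.

Definition staircase (x v : B) (h : R) (k : nat) : B :=
  x + h *: \row_l (if (l < k)%N then v 0 l else 0).

Lemma staircase0 x v h : staircase x v h 0 = x.
Proof.
rewrite /staircase (_ : \row_l _ = 0) ?scaler0 ?addr0 //.
by apply/rowP => l; rewrite !mxE.
Qed.

Lemma staircase_full x v h : staircase x v h n.+1 = x + h *: v.
Proof. by rewrite /staircase; congr (_ + _ *: _); apply/rowP => l; rewrite !mxE ltn_ord. Qed.

Lemma staircaseS x v h (k : 'I_n.+1) :
  staircase x v h k.+1 = staircase x v h k + (h * v 0 k) *: unitv R k.
Proof.
rewrite /staircase -addrA -scalerA -scalerDr; congr (_ + _ *: _).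
apply/rowP => l; rewrite !mxE ltnS leq_eqVlt.
case: (eqVneq l k) => [->|lk]; first by rewrite eqxx ltnn mulr1 add0r.
by rewrite mulr0 addr0 /= (negbTE (lk : (l != k :> nat))).
Qed.

Lemma staircase_ball (x v : B) (h : R) (k : 'I_n.+1) (t r : R) :
  `|h| * (\sum_l `|v 0 l| + 1) < r -> `|t| <= `|h * v 0 k| ->
  ball x r (staircase x v h k + t *: unitv R k).
Proof.
move=> hS ht; apply: ball_row => [|l].
  by apply: le_lt_trans hS; rewrite mulr_ge0 // addr_ge0 ?sumr_ge0.
rewrite /staircase !mxE -addrA opprD addrA subrr sub0r normrN.
have hv_small j : `|h * v 0 j| < r.
  by apply: le_lt_trans hS; rewrite normrM ler_wpM2l // sum_abs_row_bound.
case: (eqVneq l k) => [->|lk].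
  by rewrite ltnn mulr0 add0r mulr1; exact: le_lt_trans ht (hv_small k).
rewrite /= mulr0 addr0; case: ifP => _; first exact: hv_small.
by rewrite mulr0 normr0; apply: le_lt_trans (hv_small l).
Qed.

Lemma dirderiv_cvg (f : B -> R) (x : B) : Xpos x ->
  (forall y, Xpos y -> forall k, derivable f y (unitv R k)) ->
  (forall k, {for x, continuous (partial f k)}) ->
  forall v : B, (fun h : R => h^-1 * (f (x + h *: v) - f x)) @ 0^' --> dirderiv f x v.
Proof.
move=> Xx fd pc v.
set S := \sum_k `|v 0 k| + 1.
have S0 : 0 < S by rewrite /S ltr_wpDl ?sumr_ge0.
apply/cvgrPdist_lt => e e0.
have ep0 : 0 < e / S by apply: divr_gt0.
have pc_near k : \forall y \near x, `|partial f k x - partial f k y| < e / S.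
  by move/cvgrPdist_lt: (pc k) => /(_ _ ep0).
have /nbhs_ballP [r r0 near_x] :
    \forall y \near x, Xpos y /\ forall k, `|partial f k x - partial f k y| < e / S.
  exact: (near_andP _ _ (nbhs_filter x)).2
    (conj (Xpos_nbhs Xx) (filter_forall (nbhs_filter x) pc_near)).
near=> h.
have hn0 : h != 0 by near: h; exact: nbhs_dnbhs_neq.
have hS : `|h| * S < r.
  by rewrite -ltr_pdivlMr //; near: h; apply: dnbhs0_lt; apply: divr_gt0.
(* Telescope along the staircase; the mean value theorem controls each step. *)
pose P := staircase x v h.
have step_bound (k : 'I_n.+1) :
    `|v 0 k * partial f k x - h^-1 * (f (P k.+1) - f (P k))| <= `|v 0 k| * (e / S).
  have := partial_increment_bound near_x (fun z Xz => fd z Xz k)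
    (fun t => @staircase_ball x v h k t r hS).
  rewrite -staircaseS normrM -mulrA => bnd.
  have -> : v 0 k * partial f k x - h^-1 * (f (P k.+1) - f (P k)) =
      h^-1 * (h * (v 0 k * partial f k x) - (f (P k.+1) - f (P k))).
    by rewrite [RHS]mulrBr !mulrA mulVf ?mul1r.
  by rewrite normrM normfV ler_pdivrMl ?normr_gt0 // !mulrA in bnd *.
have -> : f (x + h *: v) - f x = f (P n.+1) - f (P 0%N).
  by rewrite /P staircase_full staircase0.
rewrite /dirderiv -(telescope_sumr (fun k => f (P k))) // big_mkord.
rewrite mulr_sumr -sumrB; apply: le_lt_trans (ler_norm_sum _ _ _) _.
apply: le_lt_trans (ler_sum _ (fun k _ => step_bound k)) _.
rewrite -mulr_suml mulrA ltr_pdivrMr // mulrC ltr_pM2l // /S; lra.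
Unshelve. all: by end_near.
Qed.

Lemma budget_sum (p : 'I_n.+1 -> R) (I : finType) (y : I -> B) :
  budget p (\sum_i y i) = \sum_i budget p (y i).
Proof.
rewrite /budget summxE big_split /=; congr (_ + _).
by rewrite exchange_big /=; apply: eq_bigr => j _; rewrite summxE mulr_sumr.
Qed.

Lemma cvg_dnbhs0_eq0 (g : R -> R) (l : R) : g @ 0^' --> l ->
  (\forall h \near 0^', g h = 0) -> l = 0.
Proof. by move=> gl g0; exact: (cvg_unique _ gl (cvg_near_cst 0 g0)). Qed.
End Bundles.

Section Utility.
Variables (R : realType) (n : nat).
Local Notation B := (bundle R n).
Variable u : B -> R.
Hypothesis ua : utility_assumptions u.

Lemma utility_concave : concave_on u. Proof. by case: ua. Qed.

Lemma utility_C2 : C2_on u. Proof. by case: ua. Qed.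

Lemma partial_utility_gt0 x : Xpos x -> forall j, 0 < partial u j x.
Proof. by case: ua => _ _ H _ _; apply: H. Qed.

Lemma utility_continuous x : Xpos x -> {for x, continuous u}.
Proof. by move=> /utility_C2 []. Qed.

Lemma partial_utility_continuous x : Xpos x -> forall k, {for x, continuous (partial u k)}.
Proof. by move=> /utility_C2 []. Qed.

Lemma utility_dirderiv_cvg x v : Xpos x ->
  (fun h : R => h^-1 * (u (x + h *: v) - u x)) @ 0^' --> dirderiv u x v.
Proof.
move=> Xx; apply: dirderiv_cvg => //; last exact: partial_utility_continuous.
by move=> y /utility_C2 [].
Qed.

Lemma utility_dirderiv2_cvg x v : Xpos x ->
  (fun h : R => h^-1 * (dirderiv u (x + h *: v) v - dirderiv u x v)) @ 0^' -->
  \sum_j v 0 j * dirderiv (partial u j) x v.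
Proof.
move=> Xx; have [_ _ _ _ d2u_cont] := utility_C2 Xx.
have -> : (fun h : R => h^-1 * (dirderiv u (x + h *: v) v - dirderiv u x v)) =
    (fun h => \sum_j v 0 j * (h^-1 * (partial u j (x + h *: v) - partial u j x))).
  by apply/funext => h; rewrite /dirderiv -sumrB mulr_sumr; apply: eq_bigr => j _; ring.
apply: cvg_big => //; first exact: add_continuous.
move=> j _; apply: cvgMl_tmp; apply: dirderiv_cvg => //.
by move=> y /utility_C2 [].
Qed.

Lemma utility_le_tangent x y : Xpos x -> Xpos y -> u y <= u x + dirderiv u x (y - x).
Proof.
move=> Xx Xy; set D := dirderiv u x (y - x).
case: (leP (u y) (u x + D)) => // H; exfalso.
have ep0 : 0 < u y - u x - D by lra.
have := utility_dirderiv_cvg (v := y - x) Xx.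
move/cvgrPdist_lt => /(_ _ ep0) /dnbhs0_ballP [d d0 Hd].
pose h := Num.min (d / 2) 1.
have h0 : 0 < h by rewrite /h lt_min ltr01 andbT divr_gt0.
have h1 : h <= 1 by rewrite /h ge_min lexx orbT.
have hd : h < d.
  have : h <= d / 2 by rewrite /h ge_min lexx.
  lra.
have := Hd h (lt0r_neq0 h0); rewrite gtr0_norm // => /(_ hd).
have -> : x + h *: (y - x) = h *: y + (1 - h) *: x by apply/rowP => l; rewrite !mxE; ring.
have := utility_concave Xy Xx (t := h); rewrite h1 ltW // => /(_ isT).
set A := u (h *: y + (1 - h) *: x) => Hc.
set q := h^-1 * (A - u x).
have Aq : A - u x = h * q by rewrite /q mulrA mulfV ?mul1r // gt_eqF.
rewrite ltr_norml -/D => /andP[H1 H2].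
have : u y - u x <= q by rewrite -(ler_pM2l h0); nra.
lra.
Qed.

Lemma argmax_dir_nondecr y d xs a b : Xpos y -> is_argmax_dir u y d xs ->
  0 <= a <= b -> b <= xs -> u (y + a *: d) <= u (y + b *: d).
Proof.
move=> Xy [xs0 Xs umax] /andP[a0 ab] bxs.
case: (eqVneq a b) => [->//|anb].
have altb : a < b by rewrite lt_neqAle anb.
have Xa : Xpos (y + a *: d) by apply: Xpos_segment Xy Xs _; rewrite a0 /=; lra.
pose lam := (xs - b) / (xs - a).
have lam01 : 0 <= lam <= 1 by rewrite divr_ge0 ?ler_pdivrMr ?mul1r /=; lra.
have := utility_concave Xa Xs lam01; rewrite line_convex_comb.
have -> : lam * a + (1 - lam) * xs = b by rewrite /lam; field; lra.
have := umax a a0 Xa; nra.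
Qed.

Lemma argmax_dir_nonincr y d xs a b : is_argmax_dir u y d xs ->
  xs <= a <= b -> Xpos (y + b *: d) -> u (y + b *: d) <= u (y + a *: d).
Proof.
move=> [xs0 Xs umax] /andP[xsa ab] Xb.
case: (eqVneq a b) => [->//|anb].
have altb : a < b by rewrite lt_neqAle anb.
pose lam := (b - a) / (b - xs).
have lam01 : 0 <= lam <= 1 by rewrite divr_ge0 ?ler_pdivrMr ?mul1r /=; lra.
have := utility_concave Xs Xb lam01; rewrite line_convex_comb.
have -> : lam * xs + (1 - lam) * b = a by rewrite /lam; field; lra.
have := umax b (le_trans xs0 (le_trans xsa (ltW altb))) Xb; nra.
Qed.

(* The factor 2 leaves room for a strict inequality that survives perturbation
   of [x] and [d]. *)
Lemma utility_increasing_along x d : Xpos x -> 0 < dirderiv u x d ->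
  exists2 c : R, 0 < c &
    (forall t, 0 < t <= 2 * c -> Xpos (x + t *: d) /\ u x < u (x + t *: d)) /\
    u (x + c *: d) < u (x + (2 * c) *: d).
Proof.
move=> Xx D0; set D := dirderiv u x d in D0.
have ep0 : 0 < D / 4 by rewrite divr_gt0.
have := utility_dirderiv_cvg (v := d) Xx.
move/cvgrPdist_lt => /(_ _ ep0) /dnbhs0_ballP [d1 d10 Hd1].
have [d2 d20 Hd2] := Xpos_line_nbhs d Xx.
pose e := Num.min d1 d2.
have e0 : 0 < e by rewrite /e lt_min d10 d20.
have e1 : e <= d1 by rewrite /e ge_min lexx.
have e2 : e <= d2 by rewrite /e ge_min lexx orbT.
have near_linear t : 0 < t < e -> Xpos (x + t *: d) /\
    3 * D / 4 * t < u (x + t *: d) - u x < 5 * D / 4 * t.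
  move=> /andP[t0 te]; split; first by apply: Hd2; rewrite gtr0_norm //; lra.
  have := Hd1 t (lt0r_neq0 t0); rewrite gtr0_norm // => /(_ (lt_le_trans te e1)).
  set q := t^-1 * _.
  have -> : u (x + t *: d) - u x = t * q by rewrite /q mulrA mulfV ?mul1r // gt_eqF.
  rewrite ltr_norml -/D => /andP[H1 H2].
  apply/andP; split; nra.
exists (e / 3); first by rewrite divr_gt0.
split.
  move=> t /andP[t0 te]; have /near_linear [Xt] : 0 < t < e by rewrite t0 /=; lra.
  by move=> /andP[H1 H2]; split => //; nra.
have /near_linear [_ /andP[H1 H2]] : 0 < e / 3 < e by apply/andP; split; lra.
have /near_linear [_ /andP[H3 H4]] : 0 < 2 * (e / 3) < e by apply/andP; split; lra.
nra.
Qed.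

Lemma utility_const_segment_dirderiv0 x y s : Xpos x -> Xpos y ->
  (forall t, 0 <= t <= 1 -> u (x + t *: (y - x)) = u x) ->
  0 < s < 1 -> dirderiv u (x + s *: (y - x)) (y - x) = 0.
Proof.
move=> Xx Xy ucst /andP[s0 s1].
have s01 : 0 <= s <= 1 by rewrite ltW // ltW.
apply: cvg_dnbhs0_eq0 (utility_dirderiv_cvg (v := y - x) (Xpos_between Xx Xy s01)) _.
have r0 : 0 < Num.min s (1 - s) by rewrite lt_min s0 subr_gt0.
near=> h.
have : `|h| < Num.min s (1 - s) by near: h; exact: dnbhs0_lt.
rewrite lt_min !ltr_norml => /and3P[/andP[h1 h2] h3 h4].
have sh01 : 0 <= s + h <= 1 by apply/andP; split; lra.
by rewrite -addrA -scalerDl !ucst // subrr mulr0.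
Unshelve. all: by end_near.
Qed.

Lemma utility_nonconst_segment x y : Xpos x -> Xpos y -> x != y ->
  ~ (forall t, 0 <= t <= 1 -> u (x + t *: (y - x)) = u x).
Proof.
move=> Xx Xy xy ucst; set v := y - x.
have v0 : v != 0 by rewrite subr_eq0 eq_sym.
pose c := x + (1/2) *: v.
have Xc : Xpos c by apply: Xpos_between => //; apply/andP; split; lra.
have D0 : dirderiv u c v = 0.
  by apply: utility_const_segment_dirderiv0 => //; apply/andP; split; lra.
have D2 : \sum_j v 0 j * dirderiv (partial u j) c v = 0.
  apply: cvg_dnbhs0_eq0 (utility_dirderiv2_cvg (v := v) Xc) _.
  near=> h; rewrite D0 subr0 /c -addrA -scalerDl.
  rewrite utility_const_segment_dirderiv0 ?mulr0 //.
  have : `|h| < 1/2 by near: h; apply: dnbhs0_lt; lra.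
  by rewrite ltr_norml => /andP[? ?]; apply/andP; split; lra.
case: ua => _ _ _ hessian _.
have := hessian c Xc v v0 D0.
rewrite (eq_bigr (fun j => v 0 j * dirderiv (partial u j) c v)) ?D2 ?ltxx //.
by move=> j _; rewrite /dirderiv mulr_sumr; apply: eq_bigr => k _; ring.
Unshelve. all: by end_near.
Qed.

Lemma budget_line (p : 'I_n.+1 -> R) x y (t : R) :
  budget p (x + t *: (y - x)) = budget p x + t * (budget p y - budget p x).
Proof.
rewrite /budget !mxE.
rewrite (eq_bigr (fun j => p j * x 0 j + t * (p j * y 0 j - p j * x 0 j))); last first.
  by move=> j _; rewrite !mxE; ring.
rewrite big_split /= -mulr_sumr sumrB; ring.
Qed.

Lemma budgetB (p : 'I_n.+1 -> R) x y : budget p (y - x) = budget p y - budget p x.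
Proof.
rewrite /budget !mxE (eq_bigr (fun j => p j * y 0 j - p j * x 0 j)).
  by rewrite sumrB; ring.
by move=> j _; rewrite !mxE; ring.
Qed.

Lemma dirderiv_budget x (p : 'I_n.+1 -> R) : Xpos x ->
  (forall j, j != ord0 -> pthr u x j = p j) ->
  forall w, dirderiv u x w = partial u ord0 x * budget p w.
Proof.
move=> Xx Hp w.
have d0 : partial u ord0 x != 0 by apply: lt0r_neq0; apply: partial_utility_gt0.
rewrite /dirderiv /budget (bigD1 ord0) //= mulrDr mulr_sumr mulrC; congr (_ + _).
by apply: eq_bigr => j j0; rewrite -(Hp j j0) /pthr; field.
Qed.

Lemma utility_le_budget_tangent x (p : 'I_n.+1 -> R) : Xpos x ->
  (forall j, j != ord0 -> pthr u x j = p j) ->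
  forall y, Xpos y -> u y <= u x + partial u ord0 x * (budget p y - budget p x).
Proof.
move=> Xx Hp y Xy.
by rewrite -budgetB -dirderiv_budget //; exact: utility_le_tangent.
Qed.

Lemma utility_max_on_budget x (p : 'I_n.+1 -> R) : Xpos x ->
  (forall j, j != ord0 -> pthr u x j = p j) ->
  forall y, Xpos y -> budget p y = budget p x -> u y <= u x.
Proof.
move=> Xx Hp y Xy E.
by have := utility_le_budget_tangent Xx Hp Xy; rewrite E subrr mulr0 addr0.
Qed.

Lemma utility_unique_max_on_budget x (p : 'I_n.+1 -> R) : Xpos x ->
  (forall j, j != ord0 -> pthr u x j = p j) ->
  forall y, Xpos y -> budget p y = budget p x -> u x <= u y -> y = x.
Proof.
move=> Xx Hp y Xy E uxy; apply/eqP; apply: contraT => yx; exfalso.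
apply: (utility_nonconst_segment Xx Xy); first by rewrite eq_sym.
move=> t t01; apply/eqP; rewrite eq_le; apply/andP; split.
  apply: (utility_max_on_budget Xx Hp (Xpos_between Xx Xy t01)).
  by rewrite budget_line E subrr mulr0 addr0.
rewrite (_ : _ + _ = t *: y + (1 - t) *: x); last by apply/rowP => l; rewrite !mxE; ring.
by have := utility_concave Xy Xx t01; nra.
Qed.

Lemma dirderiv_dirv_gt0 x pi j : Xpos x -> j != ord0 -> pthr u x j < pi ->
  0 < dirderiv u x (dirv pi j).
Proof.
move=> Xx j0 lt_pi; have p0 := partial_utility_gt0 Xx ord0.
rewrite dirderiv_dirv // -[partial u j x](divfK (lt0r_neq0 p0)) -mulrBl.
by rewrite mulr_gt0 // subr_gt0.
Qed.

Lemma dirderiv_Ndirv_gt0 x pi j : Xpos x -> j != ord0 -> pi < pthr u x j ->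
  0 < dirderiv u x (- dirv pi j).
Proof.
move=> Xx j0 lt_pi; have p0 := partial_utility_gt0 Xx ord0.
rewrite dirderivN dirderiv_dirv // -[partial u j x](divfK (lt0r_neq0 p0)) -mulrBl.
by rewrite -mulNr mulr_gt0 // opprB subr_gt0.
Qed.

Lemma utility_le_box x y (c : B) : Xpos x -> Xpos y -> (forall l, y 0 l <= c 0 l) ->
  u y <= u x + \sum_l c 0 l * partial u l x.
Proof.
move=> Xx Xy yc; apply: le_trans (utility_le_tangent Xx Xy) _; rewrite lerD2l.
apply: ler_sum => l _; rewrite !mxE ler_wpM2r ?(ltW (partial_utility_gt0 Xx l)) //.
by have := Xx l; have := yc l; lra.
Qed.
End Utility.

Section Limits.
Variables (R : realType) (n : nat) (T : Type) (F : set_system T).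
Hypothesis FF : ProperFilter F.
Local Notation B := (bundle R n).

Lemma cvg_Xpos_near (f : T -> B) x : f @ F --> x -> Xpos x -> \forall k \near F, Xpos (f k).
Proof. by move=> fx /Xpos_nbhs; apply: fx. Qed.

Lemma cvg_lt_near (f g : T -> R) a b : f @ F --> a -> g @ F --> b -> a < b ->
  \forall k \near F, f k < g k.
Proof.
move=> fa gb ab.
have e0 : 0 < (b - a) / 2 by rewrite divr_gt0 // subr_gt0.
move/cvgrPdist_lt: fa => /(_ _ e0) near_a.
move/cvgrPdist_lt: gb => /(_ _ e0) near_b.
apply: filterS2 near_a near_b => k /=; rewrite !ltr_norml => /andP[h1 h2] /andP[h3 h4].
lra.
Qed.

Lemma utility_cvg (u : B -> R) (f : T -> B) x : utility_assumptions u -> Xpos x ->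
  f @ F --> x -> (fun k => u (f k)) @ F --> u x.
Proof. by move=> ua Xx fx; exact: (continuous_cvg FF (utility_continuous ua Xx) fx). Qed.

Lemma pthr_cvg (u : B -> R) (f : T -> B) x j : utility_assumptions u -> Xpos x ->
  f @ F --> x -> (fun k => pthr u (f k) j) @ F --> pthr u x j.
Proof.
move=> ua Xx fx.
have := continuous_cvg FF (partial_utility_continuous (k := j) ua Xx) fx.
have := continuous_cvg FF (partial_utility_continuous (k := ord0) ua Xx) fx.
have /lt0r_neq0 d0 := partial_utility_gt0 ua Xx ord0.
by move=> /(cvgV d0) /[swap] /cvgM; apply.
Qed.

Lemma dirv_cvg (p : T -> R) (pb : R) (j : 'I_n.+1) : j != ord0 -> p @ F --> pb ->
  (fun k => dirv (p k) j) @ F --> dirv pb j.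
Proof.
move=> j0 pp; rewrite dirv_unitv //.
under eq_fun do rewrite dirv_unitv //.
by apply: cvgB; [exact: cvgZr_tmp | exact: cvg_cst].
Qed.

Lemma argmax_dir_lower_bound (u : B -> R) (y d : T -> B) (xs : T -> R) yb db :
  utility_assumptions u -> Xpos yb -> y @ F --> yb -> d @ F --> db ->
  0 < dirderiv u yb db -> (\forall k \near F, is_argmax_dir u (y k) (d k) (xs k)) ->
  exists2 c : R, 0 < c &
    (forall t, 0 < t <= c -> Xpos (yb + t *: db) /\ u yb < u (yb + t *: db)) /\
    \forall k \near F, c <= xs k.
Proof.
move=> ua Xyb yc dc D0 argmax.
have line_cvg (t : R) : (fun k => y k + t *: d k) @ F --> yb + t *: db.
  by apply: cvgD => //; exact: cvgZl_tmp.
have [c c0 [increasing steeper]] := utility_increasing_along ua Xyb D0.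
have [Xc _] : Xpos (yb + c *: db) /\ u yb < u (yb + c *: db).
  by apply: increasing; apply/andP; split; lra.
have [X2c _] : Xpos (yb + (2 * c) *: db) /\ u yb < u (yb + (2 * c) *: db).
  by apply: increasing; apply/andP; split; lra.
exists c => //; split.
  by move=> t /andP[t0 tc]; apply: increasing; apply/andP; split; lra.
have near_X2c := cvg_Xpos_near (line_cvg (2 * c)) X2c.
have near_steeper := cvg_lt_near (utility_cvg ua Xc (line_cvg c))
  (utility_cvg ua X2c (line_cvg (2 * c))) steeper.
near=> k.
have argmax_k : is_argmax_dir u (y k) (d k) (xs k) by near: k.
have X2c_k : Xpos (y k + (2 * c) *: d k) by near: k.
have steeper_k : u (y k + c *: d k) < u (y k + (2 * c) *: d k) by near: k.
case: (leP c (xs k)) => // xs_c; exfalso.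
have : xs k <= c <= 2 * c by apply/andP; split; lra.
by move=> /(argmax_dir_nonincr ua argmax_k)/(_ X2c_k); lra.
Unshelve. all: by end_near.
Qed.
End Limits.

Lemma infinitely_often_filter (E : set nat) : (forall N, exists2 t, (N <= t)%N & E t) ->
  ProperFilter [set A : set nat | exists N, forall t, (N <= t)%N -> E t -> A t].
Proof.
move=> Einf; apply: Build_ProperFilter_ex.
  by move=> A [N NA]; have [t Nt Et] := Einf N; exists t; apply: NA.
split.
- by exists 0%N.
- move=> A B [N1 H1] [N2 H2]; exists (maxn N1 N2) => t Nt Et.
  by split; [apply: H1 | apply: H2] => //; apply: leq_trans Nt; rewrite ?leq_maxl ?leq_maxr.
- by move=> A B AB [N H]; exists N => t Nt Et; apply: AB; apply: H.
Qed.

Lemma ultra_infinitely_often (E : set nat) : (forall N, exists2 t, (N <= t)%N & E t) ->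
  exists U : set_system nat, [/\ UltraFilter U, U --> \oo & U E].
Proof.
move=> Einf; have [U [UU sub]] := ultraFilterLemma (infinitely_often_filter Einf).
exists U; split => //; last by apply: sub; exists 0%N.
by move=> A [N _ NA]; apply: sub; exists N => t Nt _; exact: NA.
Qed.

Lemma ultra_eventually : exists U : set_system nat, UltraFilter U /\ U --> \oo.
Proof.
have [|U [UU Uoo _]] := @ultra_infinitely_often setT; last by exists U.
by move=> N; exists N.
Qed.

Lemma ultra_finType_constant (U : set_system nat) (T : finType) (g : nat -> T) :
  UltraFilter U -> exists c, U [set t | g t = c].
Proof.
move=> UU; apply: contrapT => Hn.
have notc c : U (~` [set t | g t = c]).
  by case: (in_ultra_setVsetC [set t | g t = c] UU) => // H; exfalso; apply: Hn; exists c.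
have PU := @ultra_proper _ _ UU.
have /filter_ex [t Ht] := filter_forall PU notc.
exact: (Ht (g t)).
Qed.

Lemma ultra_compact_cvg (U : set_system nat) (X : topologicalType) (K : set X) (f : nat -> X) :
  UltraFilter U -> compact K -> U (f @^-1` K) -> exists2 p, K p & f @ U --> p.
Proof.
move=> UU cK UK.
have [p [Kp clp]] := cK _ (fmap_proper_filter f (@ultra_proper _ _ UU)) UK.
exists p => // V Vp.
case: (in_ultra_setVsetC (f @^-1` V) UU) => // H; exfalso.
by have [q []] := clp (~` V) V H Vp.
Qed.

Lemma cvg_of_ultra (X : topologicalType) (f : nat -> X) (p : X) :
  (forall U, UltraFilter U -> U --> \oo -> f @ U --> p) -> f @ \oo --> p.
Proof.
move=> ultra_p V Vp; apply: contrapT => notV.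
have [U [UU Uoo UnotV]] : exists U, [/\ UltraFilter U, U --> \oo & U [set t | ~ V (f t)]].
  apply: ultra_infinitely_often => N; apply: contrapT => HN; apply: notV.
  by exists N => // t Nt /=; apply: contrapT => Ht; apply: HN; exists t.
have PU := @ultra_proper _ _ UU.
have UV : U [set t | V (f t)] := ultra_p U UU Uoo V Vp.
by have /filter_ex [t []] := @filterI _ U PU _ _ UV UnotV.
Qed.
Lemma ultra_cvg_between (R : realType) (U : set_system nat) (lo hi p : nat -> R) a b :
  UltraFilter U -> lo @ U --> a -> hi @ U --> b ->
  (\forall k \near U, lo k <= p k <= hi k) -> exists2 pb, a <= pb <= b & p @ U --> pb.
Proof.
move=> UU loa hib p_between; have PU := @ultra_proper _ _ UU.
have a1 : a - 1 < a by lra.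
have b1 : b < b + 1 by lra.
have lo_near := cvg_lt_near PU (cvg_cst (a - 1)) loa a1.
have hi_near := cvg_lt_near PU hib (cvg_cst (b + 1)) b1.
have p_bounded : \forall k \near U, p k \in `[a - 1, b + 1].
  near=> k.
  have /andP[plo phi] : lo k <= p k <= hi k by near: k.
  have h1 : a - 1 < lo k by near: k; exact: lo_near.
  have h2 : hi k < b + 1 by near: k; exact: hi_near.
  by rewrite in_itv /=; apply/andP; split; lra.
have [pb _ pc] := ultra_compact_cvg UU (@segment_compact R (a - 1) (b + 1)) p_bounded.
exists pb => //; apply/andP; split.
  by apply: (ler_cvg_to loa pc); apply: filterS p_between => k /andP[].
by apply: (ler_cvg_to pc hib); apply: filterS p_between => k /andP[].
Unshelve. all: by end_near.
Qed.

Section Trades.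
Variables (R : realType) (n m : nat).
Local Notation B := (bundle R n).
Local Notation St := (state R n m).
Variable u : 'I_m -> B -> R.
Hypothesis ua : forall i, utility_assumptions (u i).

Lemma sum_pair_update (i1 i2 : 'I_m) (a b : B) : i1 != i2 ->
  \sum_i (if i == i1 then a else if i == i2 then b else 0) = a + b.
Proof.
move=> i12.
rewrite (eq_bigr (fun i => (if i == i1 then a else 0) + (if i == i2 then b else 0))).
  by rewrite big_split /= -!big_mkcond /= !big_pred1_eq.
move=> i _; case: (eqVneq i i1) => [->|_]; last by rewrite add0r.
by rewrite (negbTE i12) addr0.
Qed.

Lemma trade_step_props delta (x y : St) : (forall i, Xpos (x i)) ->
  trade_step u delta x y ->
  [/\ forall i, Xpos (y i), \sum_i y i = \sum_i x i & forall i, u i (x i) <= u i (y i)].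
Proof.
move=> Xx [i1 [i2 [j [pi [xp [xm [[i12 _ _ _ _] Hp Hm ->]]]]]]].
set xi := Num.min xp xm; set d := dirv pi j.
have [xp0 Xp _] := Hp; have [xm0 Xm _] := Hm.
have xip : 0 <= xi <= xp by rewrite le_min xp0 xm0 ge_min lexx.
have xim : 0 <= xi <= xm by rewrite le_min xp0 xm0 ge_min lexx orbT.
have X1 : Xpos (x i1 + xi *: d) := Xpos_segment (Xx i1) Xp xip.
have X2 : Xpos (x i2 - xi *: d).
  by rewrite -scalerN; exact: Xpos_segment (Xx i2) Xm xim.
have U1 : u i1 (x i1) <= u i1 (x i1 + xi *: d).
  have := argmax_dir_nondecr (a := 0) (ua i1) (Xx i1) Hp _ (proj2 (andP xip)).
  by rewrite scale0r addr0; apply; rewrite lexx (proj1 (andP xip)).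
have U2 : u i2 (x i2) <= u i2 (x i2 - xi *: d).
  have := argmax_dir_nondecr (a := 0) (ua i2) (Xx i2) Hm _ (proj2 (andP xim)).
  by rewrite scale0r addr0 scalerN; apply; rewrite lexx (proj1 (andP xim)).
split => [i||i] /=.
- by case: ifP => _ //; case: ifP.
- rewrite (eq_bigr (fun i => x i + (if i == i1 then xi *: d
      else if i == i2 then - (xi *: d) else 0))); last first.
    by move=> i _; case: ifP => [/eqP -> //|_]; case: ifP => [/eqP -> //|_]; rewrite addr0.
  by rewrite big_split /= sum_pair_update // subrr addr0.
- by case: ifP => [/eqP -> //|_]; case: ifP => [/eqP -> //|_].
Qed.

Definition trade_path (s : nat -> St) := forall k,
  (exists delta, trade_step u delta (s k) (s k.+1)) \/ s k.+1 = s k.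

Lemma entry_le_sum (x : St) i l : (forall i, Xpos (x i)) -> x i 0 l <= (\sum_i x i) 0 l.
Proof.
move=> Xx; rewrite summxE (bigD1 i) //= lerDl sumr_ge0 // => k _.
exact: ltW (Xx k l).
Qed.

Section Path.
Variables (z : St) (s : nat -> St).
Hypotheses (Xz : forall i, Xpos (z i)) (s0 : s 0%N = z) (spath : trade_path s).

Lemma path_invariants k : (forall i, Xpos (s k i)) /\ \sum_i s k i = \sum_i z i.
Proof.
elim: k => [|k [Xk Sk]]; first by rewrite s0.
case: (spath k) => [[delta step]|->] //.
by have [Xk1 Sk1 _] := trade_step_props Xk step; rewrite Sk1.
Qed.

Lemma path_Xpos k i : Xpos (s k i). Proof. exact: (path_invariants k).1. Qed.

Lemma path_sum k : \sum_i s k i = \sum_i z i. Proof. exact: (path_invariants k).2. Qed.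

Lemma path_utility_nondecr i : nondecreasing_seq (fun k => u i (s k i)).
Proof.
apply/nondecreasing_seqP => k; case: (spath k) => [[delta step]|->] //.
by have [] := trade_step_props (path_Xpos k) step.
Qed.

Definition dominated_set i := [set y : B | Xpos y /\ u i (z i) <= u i y] `&`
  [set y : B | forall l, `[0, (\sum_k z k) 0 l]%classic (y 0 l)].

Lemma dominated_set_compact i : compact (dominated_set i).
Proof.
have cB := @rV_compact R n.+1 (fun l => `[0, (\sum_k z k) 0 l]%classic)
  (fun l => @segment_compact R 0 ((\sum_k z k) 0 l)).
apply: (subclosed_compact _ cB); last by move=> y [].
apply: closedI; first by case: (ua i) => _ _ _ _; apply.
have -> : [set y : B | forall l, `[0, (\sum_k z k) 0 l]%classic (y 0 l)] =
    \bigcap_(l in setT) ((fun y : B => y 0 l) @^-1` `[0, (\sum_k z k) 0 l]%classic).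
  by apply/seteqP; split => y /= H l; [move=> _; exact: H | exact: (H l I)].
apply: closed_bigI => l _; apply: preimage_closed; last exact: itv_closed.
by move=> y _; apply: coord_continuous.
Qed.

Lemma path_dominated k i : dominated_set i (s k i).
Proof.
split; first by split; [exact: path_Xpos | rewrite -[z]s0; exact: path_utility_nondecr].
move=> l; rewrite /= in_itv /= -(path_sum k) (ltW (path_Xpos k i l)) /=.
by apply: entry_le_sum => j; exact: path_Xpos.
Qed.

Lemma path_utility_bounded i : has_ubound (range (fun k => u i (s k i))).
Proof.
exists (u i (z i) + \sum_l (\sum_k z k) 0 l * partial (u i) l (z i)).
move=> _ [k _ <-]; apply: utility_le_box => //; first exact: path_Xpos.
by move=> l; have [_ /(_ l)] := path_dominated k i; rewrite /= in_itv => /andP[].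
Qed.

Lemma path_utility_cvg i :
  (fun k => u i (s k i)) @ \oo --> sup (range (fun k => u i (s k i))).
Proof. exact: nondecreasing_cvgn (path_utility_nondecr i) (path_utility_bounded i). Qed.

Lemma path_gain_cvg0 i : (fun k => u i (s k.+1 i) - u i (s k i)) @ \oo --> 0.
Proof.
pose V k := u i (s k i).
have V1 : (fun k => V k.+1) @ \oo --> sup (range V).
  by rewrite cvg_shiftS; exact: path_utility_cvg.
by have := cvgB V1 (path_utility_cvg (i := i)); rewrite subrr; apply.
Qed.

Lemma path_ultra_limit U : UltraFilter U -> exists y : St,
  [/\ forall i, Xpos (y i), forall i, (fun k => s k i) @ U --> y i & \sum_i y i = \sum_i z i].
Proof.
move=> UU; have PU := @ultra_proper _ _ UU.
have limit i : exists y, dominated_set i y /\ (fun k => s k i) @ U --> y.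
  have [y Ky sy] := ultra_compact_cvg UU (dominated_set_compact (i := i))
    (filterS (fun k _ => path_dominated k i) filterT).
  by exists y.
have [y Hy] := choice limit.
have sy i : (fun k => s k i) @ U --> y i by have [] := Hy i.
exists y; split => // [i|]; first by have [[[]]] := Hy i.
have sum_cvg : (fun k => \sum_i s k i) @ U --> \sum_i y i.
  by apply: cvg_big => //; exact: add_continuous.
have sum_const : (fun k => \sum_i s k i) = fun=> \sum_i z i.
  by apply/funext => k; exact: path_sum.
by rewrite sum_const in sum_cvg; exact: (cvg_unique _ sum_cvg (cvg_cst _)).
Qed.

Lemma path_ultra_limit_utility U y i : ProperFilter U -> U --> \oo -> Xpos y ->
  (fun k => s k i) @ U --> y -> u i y = sup (range (fun k => u i (s k i))).
Proof.
move=> PU Uoo Xy sy.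
have along_U : (fun k => u i (s k i)) @ U --> sup (range (fun k => u i (s k i))).
  exact: cvg_trans (cvg_app _ Uoo) (path_utility_cvg (i := i)).
exact: (cvg_unique _ (utility_cvg PU (ua i) Xy sy) along_U).
Qed.
End Path.
End Trades.

Section FiniteTrades.
Variables (R : realType) (n m : nat).
Local Notation B := (bundle R n).
Local Notation St := (state R n m).
Variable u : 'I_m -> B -> R.
Hypothesis ua : forall i, utility_assumptions (u i).

Record trade := Trade {
  seller : 'I_m; buyer : 'I_m; good : 'I_n.+1; price : R; xi_plus : R; xi_minus : R }.

Definition executes (delta : premiums R n m) (x y : St) (tr : trade) :=
  [/\ trade_avail u delta x (seller tr) (buyer tr) (good tr) (price tr),
      is_xi_plus (u (seller tr)) (x (seller tr)) (good tr) (price tr) (xi_plus tr),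
      is_xi_minus (u (buyer tr)) (x (buyer tr)) (good tr) (price tr) (xi_minus tr) &
      y (seller tr) =
        x (seller tr) + Num.min (xi_plus tr) (xi_minus tr) *: dirv (price tr) (good tr)].

Lemma trade_step_executes delta x y :
  trade_step u delta x y -> exists tr, executes delta x y tr.
Proof.
move=> [i1 [i2 [j [pi [xp [xm [avail Hp Hm ->]]]]]]].
by exists (Trade i1 i2 j pi xp xm); split => //=; rewrite eqxx.
Qed.

Section UltraTradeLimit.
Variables (U : set_system nat) (delta : premiums R n m) (s : nat -> St) (tr : nat -> trade).
Variables (y : St) (c1 c2 : 'I_m) (j : 'I_n.+1).
Hypotheses (UU : UltraFilter U) (dpos : forall i j, j != ord0 -> 0 < delta i j).
Hypotheses (Xs : forall k i, Xpos (s k i)) (Xy : forall i, Xpos (y i)).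
Hypotheses (sy : forall i, (fun k => s k i) @ U --> y i)
  (exec : forall k, executes delta (s k) (s k.+1) (tr k)).
Hypothesis fixed :
  \forall k \near U, [/\ seller (tr k) = c1, buyer (tr k) = c2 & good (tr k) = j].

Lemma ultra_trade_good_neq0 : j != ord0.
Proof.
have PU := @ultra_proper _ _ UU.
by have [k [_ _ <-]] := filter_ex fixed; have [[]] := exec k.
Qed.

Lemma ultra_trade_price_cvg : exists2 pb,
  pthr (u c1) (y c1) j + delta c1 j <= pb <= pthr (u c2) (y c2) j - delta c2 j &
  (fun k => price (tr k)) @ U --> pb.
Proof.
have PU := @ultra_proper _ _ UU.
have price_between : \forall k \near U,
    pthr (u c1) (s k c1) j + delta c1 j <= price (tr k) <= pthr (u c2) (s k c2) j - delta c2 j.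
  apply: filterS fixed => k [e1 e2 e3]; have [[_ _ _ _]] := exec k.
  by rewrite /psell /pbuy e1 e2 e3.
have [pb pb_between pc] := ultra_cvg_between UU
  (cvgD (pthr_cvg PU (ua c1) (Xy c1) (@sy c1)) (cvg_cst (delta c1 j)))
  (cvgB (pthr_cvg PU (ua c2) (Xy c2) (@sy c2)) (cvg_cst (delta c2 j))) price_between.
by exists pb.
Qed.

Lemma ultra_trade_amount_lower_bound pb :
  pthr (u c1) (y c1) j < pb < pthr (u c2) (y c2) j -> (fun k => price (tr k)) @ U --> pb ->
  exists2 c, 0 < c & [/\ Xpos (y c1 + c *: dirv pb j),
    u c1 (y c1) < u c1 (y c1 + c *: dirv pb j) &
    \forall k \near U, c <= Num.min (xi_plus (tr k)) (xi_minus (tr k))].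
Proof.
move=> /andP[pb_seller pb_buyer] pc; have PU := @ultra_proper _ _ UU.
have j0 := ultra_trade_good_neq0.
have dc : (fun k => dirv (price (tr k)) j) @ U --> dirv pb j := dirv_cvg PU j0 pc.
have seller_argmax : \forall k \near U,
    is_argmax_dir (u c1) (s k c1) (dirv (price (tr k)) j) (xi_plus (tr k)).
  by apply: filterS fixed => k [e1 _ e3]; have [_ + _ _] := exec k; rewrite e1 e3.
have buyer_argmax : \forall k \near U,
    is_argmax_dir (u c2) (s k c2) (- dirv (price (tr k)) j) (xi_minus (tr k)).
  by apply: filterS fixed => k [_ e2 e3]; have [_ _ + _] := exec k; rewrite e2 e3.
have [cs cs0 [seller_up seller_amount]] :=
  argmax_dir_lower_bound PU (ua c1) (Xy c1) (@sy c1) dc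
    (dirderiv_dirv_gt0 (ua c1) (Xy c1) j0 pb_seller) seller_argmax.
have [cb cb0 [_ buyer_amount]] :=
  argmax_dir_lower_bound PU (ua c2) (Xy c2) (@sy c2) (cvgN dc)
    (dirderiv_Ndirv_gt0 (ua c2) (Xy c2) j0 pb_buyer) buyer_argmax.
have c_pos : 0 < Num.min cs cb by rewrite lt_min cs0 cb0.
have /seller_up [Xc up_c] : 0 < Num.min cs cb <= cs by rewrite c_pos ge_min lexx.
exists (Num.min cs cb) => //; split => //; near=> k; rewrite le_min; apply/andP; split.
  by apply: le_trans (_ : cs <= _); [rewrite ge_min lexx | near: k].
by apply: le_trans (_ : cb <= _); [rewrite ge_min lexx orbT | near: k].
Unshelve. all: by end_near.
Qed.

Lemma ultra_trade_gain_bounded_below :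
  exists2 eta, 0 < eta & \forall k \near U, eta < u c1 (s k.+1 c1) - u c1 (s k c1).
Proof.
have PU := @ultra_proper _ _ UU.
have [pb /andP[seller_pb pb_buyer] pc] := ultra_trade_price_cvg.
have pb_strict : pthr (u c1) (y c1) j < pb < pthr (u c2) (y c2) j.
  have := dpos c1 ultra_trade_good_neq0; have := dpos c2 ultra_trade_good_neq0.
  by move=> d2 d1; apply/andP; split; lra.
have [c c0 [Xc up_c amount]] := ultra_trade_amount_lower_bound pb_strict pc.
pose eta := (u c1 (y c1 + c *: dirv pb j) - u c1 (y c1)) / 2.
exists eta; first by rewrite divr_gt0 // subr_gt0.
have dc := dirv_cvg PU ultra_trade_good_neq0 pc.
have line_cvg : (fun k => s k c1 + c *: dirv (price (tr k)) j) @ U --> y c1 + c *: dirv pb j.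
  by apply: cvgD => //; exact: cvgZl_tmp.
have eta_lt : eta < u c1 (y c1 + c *: dirv pb j) - u c1 (y c1) by rewrite /eta; lra.
have gain_c := cvg_lt_near PU (cvg_cst eta)
  (cvgB (utility_cvg PU (ua c1) Xc line_cvg) (utility_cvg PU (ua c1) (Xy c1) (@sy c1))) eta_lt.
near=> k.
have [e1 _ e3] : [/\ seller (tr k) = c1, buyer (tr k) = c2 & good (tr k) = j] by near: k.
have [_ argmax _ next] := exec k; rewrite e1 e3 in argmax next.
have c_le : 0 <= c <= Num.min (xi_plus (tr k)) (xi_minus (tr k)) by rewrite ltW //=; near: k.
have gain_k : eta < u c1 (s k c1 + c *: dirv (price (tr k)) j) - u c1 (s k c1).
  by near: k; exact: gain_c.
have := argmax_dir_nondecr (ua c1) (Xs k c1) argmax c_le; rewrite ge_min lexx -next.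
by move=> /(_ isT); lra.
Unshelve. all: by end_near.
Qed.
End UltraTradeLimit.

Lemma no_infinite_trades (delta : premiums R n m) (z : St) :
  (forall i j, j != ord0 -> 0 < delta i j) -> (forall i, Xpos (z i)) ->
  ~ exists s : nat -> St, s 0%N = z /\ forall k, trade_step u delta (s k) (s k.+1).
Proof.
move=> dpos Xz [s [s0 steps]].
have spath : trade_path u s by move=> k; left; exists delta.
have [tr exec] := choice (fun k => trade_step_executes (steps k)).
have [U [UU Uoo]] := ultra_eventually; have PU := @ultra_proper _ _ UU.
have [y [Xy sy _]] := path_ultra_limit ua Xz s0 spath UU.
have [[[c1 c2] j] fixed] :=
  ultra_finType_constant (fun k => (seller (tr k), buyer (tr k), good (tr k))) UU.
have {}fixed : \forall k \near U, [/\ seller (tr k) = c1, buyer (tr k) = c2 & good (tr k) = j].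
  by apply: filterS fixed => k /= [-> -> ->].
have [eta eta0 big_gain] := ultra_trade_gain_bounded_below
  UU dpos (path_Xpos ua Xz s0 spath) Xy sy exec fixed.
have gain_cvg0 : (fun k => u c1 (s k.+1 c1) - u c1 (s k c1)) @ U --> 0.
  exact: cvg_trans (cvg_app _ Uoo) (path_gain_cvg0 ua Xz s0 spath c1).
have small_gain := cvg_lt_near PU gain_cvg0 (cvg_cst eta) eta0.
have [k [/= gain_k small_k]] := filter_ex (@filterI _ U PU _ _ big_gain (small_gain PU)).
by have := lt_trans gain_k small_k; rewrite ltxx.
Qed.
End FiniteTrades.

Section Equilibrium.
Variables (R : realType) (n m : nat).
Local Notation St := (state R n m).
Variable u : 'I_m -> bundle R n -> R.
Hypothesis ua : forall i, utility_assumptions (u i).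

Lemma common_thresholds_equilibrium (xb : St) (pb : 'I_n.+1 -> R) :
  (forall i, Xpos (xb i)) -> (forall i j, j != ord0 -> pthr (u i) (xb i) j = pb j) ->
  equilibrium u xb pb.
Proof.
move=> Xb common i; split => // x Xx.
exact (utility_max_on_budget (ua i) (Xb i) (common i) Xx).
Qed.

Lemma common_thresholds_allocation_unique (xb y : St) (pb : 'I_n.+1 -> R) :
  (forall i, Xpos (xb i)) -> (forall i j, j != ord0 -> pthr (u i) (xb i) j = pb j) ->
  (forall i, Xpos (y i)) -> \sum_i y i = \sum_i xb i ->
  (forall i, u i (y i) = u i (xb i)) -> y = xb.
Proof.
move=> Xb common Xy same_total same_u.
have budget_ge i : 0 <= budget pb (y i) - budget pb (xb i).
  have := utility_le_budget_tangent (ua i) (Xb i) (common i) (Xy i).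
  rewrite same_u -{1}(addr0 (u i (xb i))) lerD2l pmulr_rge0 //.
  exact: partial_utility_gt0.
have budget_eq : \sum_i (budget pb (y i) - budget pb (xb i)) = 0.
  by rewrite sumrB -!budget_sum same_total subrr.
apply/funext => i; apply: (utility_unique_max_on_budget (ua i) (Xb i) (common i) (Xy i)).
  by apply/eqP; rewrite -subr_eq0; apply/eqP; exact: psumr_eq0P budget_eq i isT.
by rewrite same_u.
Qed.
End Equilibrium.

Lemma premium_le_maxprem (R : realType) (n m : nat) (delta : premiums R n m) i j :
  (forall i j, j != ord0 -> 0 <= delta i j) -> j != ord0 -> delta i j <= maxprem delta.
Proof.
move=> dpos j0; apply: le_trans (le_bigmax _ _ i).
exact: le_bigmax_cond.
Qed.

Section StagedProcess.
Variables (R : realType) (n m : nat).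
Local Notation B := (bundle R n).
Local Notation St := (state R n m).
Variable u : 'I_m -> B -> R.
Hypothesis ua : forall i, utility_assumptions (u i).
Variables (x0 : St) (delta : nat -> premiums R n m) (s : nat -> St) (sg : nat -> nat).
Hypotheses (Xx0 : forall i, Xpos (x0 i)) (dpos : forall k i j, j != ord0 -> 0 < delta k i j).
Hypotheses (dcvg : (fun k => maxprem (delta k)) @ \oo --> 0)
  (process : staged_process u delta x0 s sg).

Lemma staged_trade_path : trade_path u s.
Proof.
have [_ _ step] := process.
by move=> t; case: (step t) => [[_ trade]|[_ _ ->]]; [left; exists (delta (sg t))|right].
Qed.

Lemma stage_nondecr : {homo sg : a b / (a <= b)%N}.
Proof.
have [_ _ step] := process.
apply: homo_leq => // [a b c|t]; first exact: leq_trans.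
by case: (step t) => [[-> _]|[_ -> _]].
Qed.

Definition stage_end t := ~ some_trade_avail u (delta (sg t)) (s t) /\ sg t.+1 = (sg t).+1.

Lemma stage_ends_infinitely_often N : exists2 t, (N <= t)%N & stage_end t.
Proof.
have [s0 _ step] := process.
apply: contrapT => no_end.
have trading t : (N <= t)%N -> sg t.+1 = sg t /\ trade_step u (delta (sg t)) (s t) (s t.+1).
  by move=> Nt; case: (step t) => // -[no_trade next _]; exfalso; apply: no_end; exists t.
have same_stage k : sg (N + k)%N = sg N.
  elim: k => [|k IH]; first by rewrite addn0.
  by rewrite addnS (trading _ (leq_addr k N)).1 IH.
apply: (no_infinite_trades ua (dpos (sg N)) (path_Xpos ua Xx0 s0 staged_trade_path N)).
exists (fun k => s (N + k)%N); split => [|k]; first by rewrite addn0.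
by rewrite addnS -(same_stage k); exact: (trading _ (leq_addr k N)).2.
Qed.

Lemma stage_unbounded K : exists N, forall t, (N <= t)%N -> (K <= sg t)%N.
Proof.
elim: K => [|K [N HN]]; first by exists 0%N.
have [t Nt [_ next]] := stage_ends_infinitely_often N.
exists t.+1 => t' tt'; apply: leq_trans (stage_nondecr tt').
by rewrite next ltnS; exact: HN.
Qed.

Lemma premium_vanishes i j : j != ord0 -> (fun t => delta (sg t) i j) @ \oo --> 0.
Proof.
move=> j0; apply/cvgrPdist_lt => e e0.
move/cvgrPdist_lt: dcvg => /(_ e e0) [K _ HK].
have [N HN] := stage_unbounded K.
exists N => // t Nt /=; rewrite sub0r normrN gtr0_norm ?dpos //.
have dmax : delta (sg t) i j <= maxprem (delta (sg t)).
  by apply: (premium_le_maxprem i _ j0) => ? ? /dpos /ltW.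
apply: le_lt_trans dmax _.
by have := HK _ (HN _ Nt); rewrite /= sub0r normrN => /(le_lt_trans (ler_norm _)).
Qed.

Lemma stage_end_limit_thresholds_le U (xb : St) i i' j :
  ProperFilter U -> U --> \oo -> U stage_end ->
  (forall i, Xpos (xb i)) -> (forall i, (fun t => s t i) @ U --> xb i) ->
  j != ord0 -> i != i' -> pthr (u i') (xb i') j <= pthr (u i) (xb i) j.
Proof.
move=> PU Uoo Uend Xb sb j0 ii'.
have [s0 _ _] := process.
have premium_U k : (fun t => delta (sg t) k j) @ U --> 0.
  exact: cvg_trans (cvg_app _ Uoo) (premium_vanishes k j0).
have sell_cvg : (fun t => pthr (u i) (s t i) j + delta (sg t) i j + delta (sg t) i' j) @ U -->
    pthr (u i) (xb i) j + 0 + 0.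
  exact: cvgD (cvgD (pthr_cvg PU (ua i) (Xb i) (sb i)) (premium_U i)) (premium_U i').
rewrite !addr0 in sell_cvg.
apply: (ler_cvg_to (pthr_cvg PU (ua i') (Xb i') (sb i')) sell_cvg).
apply: filterS Uend => t [no_trade _] /=.
case: (leP (psell u (delta (sg t)) (s t) i j) (pbuy u (delta (sg t)) (s t) i' j)) => avail.
  exfalso; apply: no_trade; exists i, i', j, (psell u (delta (sg t)) (s t) i j).
  by split => //; [exact (path_Xpos ua Xx0 s0 staged_trade_path t i j) | rewrite lexx avail].
by move: avail; rewrite /psell /pbuy => avail; apply: ltW; lra.
Qed.

Lemma staged_process_cvg : exists (xbar : St) (pbar : 'I_n.+1 -> R),
  [/\ forall i, (fun t => s t i) @ \oo --> xbar i,
      forall i j, j != ord0 -> (fun t => pthr (u i) (s t i) j) @ \oo --> pbar j,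
      equilibrium u xbar pbar
    & forall i j, j != ord0 -> pthr (u i) (xbar i) j = pbar j].
Proof.
have [s0 _ _] := process; have spath := staged_trade_path.
have [U [UU Uoo Uend]] := ultra_infinitely_often stage_ends_infinitely_often.
have PU := @ultra_proper _ _ UU.
have [xb [Xb sb sum_xb]] := path_ultra_limit ua Xx0 s0 spath UU.
(* Any agent's limit thresholds will do; [pick] only avoids a case split on [m = 0]. *)
pose pb j := if [pick i : 'I_m] is Some i0 then pthr (u i0) (xb i0) j else 0.
have common i j : j != ord0 -> pthr (u i) (xb i) j = pb j.
  move=> j0; rewrite /pb; case: pickP => [i0 _|/(_ i)//].
  case: (eqVneq i i0) => [->//|ii0].
  by apply: le_anti; rewrite !(stage_end_limit_thresholds_le PU Uoo Uend Xb sb j0) // eq_sym.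
have s_cvg i : (fun t => s t i) @ \oo --> xb i.
  apply: cvg_of_ultra => U' UU' U'oo; have PU' := @ultra_proper _ _ UU'.
  have [y [Xy sy sum_y]] := path_ultra_limit ua Xx0 s0 spath UU'.
  suff -> : xb = y by exact: sy.
  apply/esym/(common_thresholds_allocation_unique ua Xb common Xy); first by rewrite sum_y.
  move=> k; rewrite (path_ultra_limit_utility ua Xx0 s0 spath PU' U'oo (Xy k) (sy k)).
  by rewrite (path_ultra_limit_utility ua Xx0 s0 spath PU Uoo (Xb k) (sb k)).
exists xb, pb; split => // [i j j0|]; last exact (common_thresholds_equilibrium ua Xb common).
by rewrite -(common i j j0); exact (pthr_cvg eventually_filter (ua i) (Xb i) (s_cvg i)).
Qed.
End StagedProcess.

Theorem theorem3 (R : realType) (n m : nat) (u : 'I_m -> bundle R n -> R)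
    (x0 : state R n m) :
  (forall i, utility_assumptions (u i)) ->
  (forall i, Xpos (x0 i)) ->
  (forall delta : premiums R n m,
     (forall i j, j != ord0 -> 0 < delta i j) ->
     ~ exists s : nat -> state R n m,
         s 0%N = x0 /\ forall k, trade_step u delta (s k) (s k.+1)) /\
  (forall (delta : nat -> premiums R n m) (s : nat -> state R n m) (sg : nat -> nat),
     (forall k i j, j != ord0 -> 0 < delta k i j) ->
     (forall k i j, j != ord0 -> delta k.+1 i j <= delta k i j) ->
     (fun k => maxprem (delta k)) @ \oo --> 0 ->
     staged_process u delta x0 s sg ->
     exists (xbar : state R n m) (pbar : 'I_n.+1 -> R),
       [/\ forall i, (fun t => s t i) @ \oo --> xbar i,
           forall i j, j != ord0 -> (fun t => pthr (u i) (s t i) j) @ \oo --> pbar j,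
           equilibrium u xbar pbar
         & forall i j, j != ord0 -> pthr (u i) (xbar i) j = pbar j]).
Proof.
move=> ua Xx0; split => [delta dpos|delta s sg dpos _ dcvg process].
  exact (no_infinite_trades ua dpos Xx0).
exact (staged_process_cvg ua Xx0 dpos dcvg process).
Qed.
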